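(* Let $(E,\mathscr{T},\le)$ be a locally compact $T_2$-preordered Tychonoff space with $G(\le)=\bigcap_{f\in\mathcal{F}}G_f$. Then every Hausdorff $T_2$-preorder compactification $c:E\to cE$ of $E$ dominates the $\mathcal{H}$-compactification, where $\mathcal{H}\subseteq\mathcal{F}$ is the family of those $f\in\mathcal{F}$ such that $f\circ c^{-1}:c(E)\to[0,1]$ extends to a continuous isotone function $cE\to[0,1]$; moreover this $\mathcal{H}$ satisfies $G(\le)=\bigcap_{h\in\mathcal{H}}G_h$.
   Context: $T_2$-preordered: the graph $G(\le)=\{(x,y):x\le y\}$ is closed in $E\times E$. $\mathcal{F}$ is the family of continuous isotone ($x\le y\Rightarrow f(x)\le f(y)$) functions $f:E\to[0,1]$; $G_f=\{(x,y):f(x)\le f(y)\}$. A preorder compactification is a preorder embedding (continuous isotone injective map, homeomorphism onto image, isotone inverse for the induced preorder) $c:E\to cE$ with dense image into a compact topological preordered space; it is a Hausdorff $T_2$-preorder compactification if $cE$ is Hausdorff and $\le_c$ has closed graph. $c_1\le c_2$ ($c_2$ dominates $c_1$) means there is a continuous isotone $C:c_2E\to c_1E$ with $C\circ c_2=c_1$. $\mathcal{C}$ is the family of continuous functions $E\to[0,1]$ constant outside a compact set. For $\mathcal{H}\subseteq\mathcal{F}$ with $G(\le)=\bigcap_{h\in\mathcal{H}}G_h$, the $\mathcal{H}$-compactification is $c:E\to[0,1]^{\mathcal{H}\cup\mathcal{C}}$, $c(x)=(g(x))_{g\in\mathcal{H}\cup\mathcal{C}}$, with $cE$ the closure of $c(E)$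 with the product (induced) topology and preorder $x\le_c y$ iff $x_h\le y_h$ for all $h\in\mathcal{H}$. *)

From HB Require Import structures.
From mathcomp Require Import all_boot all_order all_algebra.
From mathcomp Require Import all_classical all_reals all_analysis.
Set Implicit Arguments. Unset Strict Implicit. Unset Printing Implicit Defensive.
Import Order.TTheory GRing.Theory Num.Theory.
Import numFieldNormedType.Exports.
Local Open Scope classical_set_scope.
Local Open Scope ring_scope.

Definition preorder_rel {T : Type} (le : T -> T -> Prop) : Prop :=
  (forall x, le x x) /\ (forall x y z, le x y -> le y z -> le x z).

Definition graph_of {T : Type} (le : T -> T -> Prop) : set (T * T) :=
  [set p | le p.1 p.2].

Definition T2_preordered {T : topologicalType} (le : T -> T -> Prop) : Prop :=
  preorder_rel le /\ closed (graph_of le).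

Definition isotone {T U : Type} (leT : T -> T -> Prop) (leU : U -> U -> Prop)
  (f : T -> U) : Prop := forall x y, leT x y -> leU (f x) (f y).

Definition tychonoff_space (R : realType) (T : topologicalType) : Prop :=
  hausdorff_space T /\
  forall (x : T) (B : set T), closed B -> ~ B x ->
    exists f : T -> R, continuous f /\ (forall y, 0 <= f y <= 1) /\
      f x = 0 /\ (forall y, B y -> f y = 1).

Definition Ffam (R : realType) (E : topologicalType) (le : E -> E -> Prop)
  (f : E -> R) : Prop :=
  continuous f /\ isotone le (fun a b : R => a <= b) f /\ (forall x, 0 <= f x <= 1).

Definition Gf (R : realType) {T : Type} (f : T -> R) : set (T * T) :=
  [set p | f p.1 <= f p.2].

Definition Cfam (R : realType) (E : topologicalType) (g : E -> R) : Prop :=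
  continuous g /\ (forall x, 0 <= g x <= 1) /\
  exists K : set E, compact K /\ exists a : R, forall x, ~ K x -> g x = a.

(** Preorder embedding: continuous, isotone, injective, homeomorphism onto its
    image (open sets of E are traces of open sets of X on c(E)), and with
    isotone inverse for the induced preorder. *)
Definition preorder_embedding (E X : topologicalType)
  (le : E -> E -> Prop) (lec : X -> X -> Prop) (c : E -> X) : Prop :=
  continuous c /\ isotone le lec c /\ injective c /\
  (forall U : set E, open U -> exists V : set X, open V /\ c @` U = V `&` range c) /\
  (forall x y, lec (c x) (c y) -> le x y).

Definition preorder_compactification (E X : topologicalType)
  (le : E -> E -> Prop) (lec : X -> X -> Prop) (c : E -> X) : Prop :=
  compact [set: X] /\ preorder_rel lec /\ preorder_embedding le lec c /\
  dense (range c).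

Definition hausdorff_T2_preorder_compactification (E X : topologicalType)
  (le : E -> E -> Prop) (lec : X -> X -> Prop) (c : E -> X) : Prop :=
  preorder_compactification le lec c /\ hausdorff_space X /\ closed (graph_of lec).

Definition Hfam (R : realType) (E X : topologicalType)
  (le : E -> E -> Prop) (lec : X -> X -> Prop) (c : E -> X) (f : E -> R) : Prop :=
  Ffam le f /\
  exists F : X -> R, continuous F /\ (forall z, 0 <= F z <= 1) /\
    isotone lec (fun a b : R => a <= b) F /\ (forall x, F (c x) = f x).

(** The H-compactification, for a family Hf of functions E -> R:
    index set H u C, embedding into the product [0,1]^(H u C) (taken inside
    R^(H u C) with the product topology), closure of the image, and the
    preorder u <= v iff u_h <= v_h for all h in H. *)
Definition HCindex (R : realType) (E : topologicalType) (Hf : (E -> R) -> Prop) :=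
  {g : E -> R | Hf g \/ Cfam g}.

Definition HCmap (R : realType) (E : topologicalType) (Hf : (E -> R) -> Prop)
  (x : E) : {ptws (HCindex Hf) -> R} := fun i => sval i x.

Definition HCspace (R : realType) (E : topologicalType) (Hf : (E -> R) -> Prop)
  : set {ptws (HCindex Hf) -> R} := closure (range (@HCmap R E Hf)).

Definition HCle (R : realType) (E : topologicalType) (Hf : (E -> R) -> Prop)
  (u v : {ptws (HCindex Hf) -> R}) : Prop :=
  forall i : HCindex Hf, Hf (sval i) -> u i <= v i.

(** c2 : E -> X dominates the H-compactification: there is a continuous
    isotone C : X -> cE (cE = closure of the image, subspace of the product)
    with C o c2 = c_H. *)
Definition dominates_HC (R : realType) (E X : topologicalType)
  (lec : X -> X -> Prop) (c : E -> X) (Hf : (E -> R) -> Prop) : Prop :=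
  exists C : X -> {ptws (HCindex Hf) -> R},
    continuous C /\ (forall z, @HCspace R E Hf (C z)) /\
    isotone lec (@HCle R E Hf) C /\ (forall x, C (c x) = @HCmap R E Hf x).

From HB Require Import structures.
From mathcomp Require Import all_boot all_order all_algebra.
From mathcomp Require Import all_classical all_reals all_analysis.
From mathcomp Require Import zify lra.
Set Implicit Arguments.
Unset Strict Implicit.
Unset Printing Implicit Defensive.
Import Order.TTheory GRing.Theory Num.Theory.
Import numFieldNormedType.Exports.
Local Open Scope classical_set_scope.
Local Open Scope ring_scope.

(* Every coordinate of the H-compactification extends continuously to cE:
   for h in H by the definition of H, for g in C by the constant value of g
   off its compact set. The family of extensions is the dominating map.
   If x <= y fails then so does c x <= c y, and Nachbin's ordered Urysohn
   lemma in the compact T2-preordered space cE gives a continuous isotone F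
   with F (c x) = 1 > 0 = F (c y); then F \o c lies in H. Nachbin's lemma is
   Urysohn's dyadic construction carried out with open lower sets, which
   interpolate because up- and down-sets of closed sets are closed. *)

Definition upset {T : Type} (le : T -> T -> Prop) (A : set T) : set T :=
  [set z | exists2 y, A y & le y z].

Definition downset {T : Type} (le : T -> T -> Prop) (A : set T) : set T :=
  [set z | exists2 y, A y & le z y].

Definition lower_set {T : Type} (le : T -> T -> Prop) (A : set T) : Prop :=
  forall x y, le x y -> A y -> A x.

Lemma dyadic_between (R : realType) (t s : R) : 0 <= t -> t < s ->
  exists n k, t < k%:R / (2 ^ n)%:R /\ k.+1%:R / (2 ^ n)%:R < s.
Proof.
move=> t0 ts; have st0 : 0 < (s - t) / 2 by rewrite divr_gt0 // subr_gt0.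
have [n _ /(_ n (leqnn n))] := near_infty_natSinv_expn_lt (PosNum st0).
rewrite /= mul1r -natrX => n_small.
set N := (2 ^ n)%:R : R; have N0 : 0 < N by rewrite ltr0n expn_gt0.
have gap : 2 < (s - t) * N.
  by rewrite ltr_pdivlMr // mulrC ltr_pdivrMr // in n_small.
have /andP [tN_ge tN_lt] := truncn_itv (mulr_ge0 t0 (ltW N0)).
exists n, (Num.truncn (t * N)).+1; split; first by rewrite ltr_pdivlMr.
rewrite ltr_pdivrMr // -natr1 -addn1 natrD; move: gap tN_ge; rewrite mulrBl.
set a := (Num.truncn (t * N))%:R; lra.
Qed.

Section dyadic_urysohn.
Context {R : realType} {X : topologicalType} (P : set X -> Prop).
Variable mid : set X -> set X -> set X.
Hypothesis P_open : forall U, P U -> open U.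
Hypothesis midP : forall {U V}, P U -> P V -> closure U `<=` V ->
  [/\ P (mid U V), closure U `<=` mid U V & closure (mid U V) `<=` V].
Variables W0 V0 : set X.
Hypotheses (PW0 : P W0) (PV0 : P V0) (W0V0 : closure W0 `<=` V0).

(* The open set of level [k / 2 ^ n]; levels [k >= 2 ^ n] are all [V0]. *)
Fixpoint dyadic_set (n k : nat) : set X :=
  if n is n'.+1 then
    if ((k %% 2 == 1) && (k < 2 ^ n))%N
    then mid (dyadic_set n' (k %/ 2)) (dyadic_set n' (k %/ 2).+1)
    else dyadic_set n' (k %/ 2)
  else if k == 0%N then W0 else V0.

Lemma dyadic_set_spec n :
  [/\ forall k, P (dyadic_set n k),
      forall k, (k < 2 ^ n)%N -> closure (dyadic_set n k) `<=` dyadic_set n k.+1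
    & forall k, (2 ^ n <= k)%N -> dyadic_set n k = V0].
Proof.
elim: n => [|n [IHP IHcl IHV]].
  split=> [k /=|k|k]; first by case: ifP.
    by rewrite expn0 ltnS leqn0 => /eqP ->.
  by rewrite expn0 /=; case: k.
have half_lt k : (k < 2 ^ n.+1)%N -> (k %/ 2 < 2 ^ n)%N by rewrite expnS; lia.
have midk k (kn : (k < 2 ^ n.+1)%N) :=
  midP (IHP (k %/ 2)%N) (IHP ((k %/ 2).+1)%N) (IHcl _ (half_lt k kn)).
split=> [k /=|k kn /=|k kn /=].
- case: ifP => [/andP [_ kn]|_]; last exact: IHP.
  by have [] := midk k kn.
- have [k_odd|k_even] := boolP (k %% 2 == 1)%N.
    have -> : (k.+1 %% 2 == 1)%N = false by lia.
    have -> : (k.+1 %/ 2 = (k %/ 2).+1)%N by lia.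
    by rewrite kn; have [] := midk k kn.
  have -> : (k.+1 %% 2 == 1)%N by lia.
  have -> : (k.+1 %/ 2 = k %/ 2)%N by lia.
  have -> : (k.+1 < 2 ^ n.+1)%N by move: kn; rewrite expnS; lia.
  by have [] := midk k kn.
- rewrite ltnNge kn andbF; apply: IHV.
  by move: kn; rewrite expnS; lia.
Qed.

Lemma dyadic_setP n k : P (dyadic_set n k).
Proof. by have [] := dyadic_set_spec n. Qed.

Lemma closure_dyadic_set n k :
  (k < 2 ^ n)%N -> closure (dyadic_set n k) `<=` dyadic_set n k.+1.
Proof. by have [_ + _] := dyadic_set_spec n; apply. Qed.

Lemma dyadic_set_large n k : (2 ^ n <= k)%N -> dyadic_set n k = V0.
Proof. by have [_ _] := dyadic_set_spec n; apply. Qed.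

Lemma dyadic_set_double n k : dyadic_set n.+1 (k * 2) = dyadic_set n k.
Proof.
rewrite /= (_ : (k * 2) %% 2 == 1 = false)%N; last by lia.
by rewrite mulnK.
Qed.

Lemma dyadic_set_refine n m k :
  dyadic_set (n + m) (k * 2 ^ m) = dyadic_set n k.
Proof.
elim: m => [|m IHm]; first by rewrite addn0 expn0 muln1.
by rewrite addnS expnS mulnCA mulnC dyadic_set_double IHm.
Qed.

Lemma dyadic_set0 n : dyadic_set n 0 = W0.
Proof. by have := dyadic_set_refine 0 n 0; rewrite mul0n add0n. Qed.

Lemma dyadic_set_mono n k k' :
  (k <= k')%N -> dyadic_set n k `<=` dyadic_set n k'.
Proof.
elim: k' => [|k' IHk]; first by rewrite leqn0 => /eqP ->.
rewrite leq_eqVlt ltnS => /orP [/eqP -> //|/IHk kk']; apply: subset_trans kk' _.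
have [kn|nk] := ltnP k' (2 ^ n).
  exact: subset_trans (@subset_closure _ _) (closure_dyadic_set kn).
by rewrite !dyadic_set_large // ltnW.
Qed.

Lemma dyadic_set_le m j n k :
  (j * 2 ^ n <= k * 2 ^ m)%N -> dyadic_set m j `<=` dyadic_set n k.
Proof.
rewrite -(dyadic_set_refine m n) -(dyadic_set_refine n m) addnC.
exact: dyadic_set_mono.
Qed.

Definition dyadic_levels (x : X) : set R :=
  [set r | exists n k, dyadic_set n k x /\ r = k%:R / (2 ^ n)%:R] `|` [set 1].

Definition dyadic_urysohn (x : X) : R := inf (dyadic_levels x).

Let dyadic_levels_n0 x : dyadic_levels x !=set0.
Proof. by exists 1; right. Qed.

Let dyadic_levels_ge0 x : lbound (dyadic_levels x) 0.
Proof. by move=> _ [[n [k [_ ->]]]|->]. Qed.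

Let pow2_gt0 n : 0 < (2 ^ n)%:R :> R.
Proof. by rewrite ltr0n expn_gt0. Qed.

Lemma dyadic_urysohn_le n k x :
  dyadic_set n k x -> dyadic_urysohn x <= k%:R / (2 ^ n)%:R.
Proof.
move=> Snkx; apply: ge_inf; first by exists 0; exact: dyadic_levels_ge0.
by left; exists n, k.
Qed.

Lemma dyadic_urysohn_ge n k x : (k <= 2 ^ n)%N -> ~ dyadic_set n k x ->
  k%:R / (2 ^ n)%:R <= dyadic_urysohn x.
Proof.
move=> kn nSx; apply: lb_le_inf => // _ [[m [j [Sx ->]]]|->].
  rewrite ler_pdivrMr // mulrAC ler_pdivlMr // -!natrM ler_nat leqNgt.
  by apply/negP => /ltnW /dyadic_set_le /(_ x Sx).
by rewrite ler_pdivrMr // mul1r ler_nat.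
Qed.

Lemma dyadic_urysohn_ge0 x : 0 <= dyadic_urysohn x.
Proof. exact: lb_le_inf. Qed.

Lemma dyadic_urysohn_le1 x : dyadic_urysohn x <= 1.
Proof. by apply: ge_inf; [exists 0; exact: dyadic_levels_ge0 | right]. Qed.

Lemma dyadic_urysohn_W0 x : W0 x -> dyadic_urysohn x = 0.
Proof.
move=> W0x; apply/eqP; rewrite eq_le dyadic_urysohn_ge0 andbT.
by have := @dyadic_urysohn_le 0 0 x; rewrite mul0r dyadic_set0; apply.
Qed.

Lemma dyadic_urysohn_notV0 x : ~ V0 x -> dyadic_urysohn x = 1.
Proof.
move=> nV0x; apply/eqP; rewrite eq_le dyadic_urysohn_le1 /=.
by have := @dyadic_urysohn_ge 0 1 x (leqnn _); rewrite divr1; apply.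
Qed.

Lemma dyadic_urysohn_mono x y : (forall U, P U -> U y -> U x) ->
  dyadic_urysohn x <= dyadic_urysohn y.
Proof.
move=> Pxy; apply: lb_le_inf => // _ [[n [k [Sy ->]]]|->].
  exact/dyadic_urysohn_le/(Pxy _ (dyadic_setP n k)).
exact: dyadic_urysohn_le1.
Qed.

Let dyadic_urysohn_usc x t : dyadic_urysohn x < t ->
  \forall y \near x, dyadic_urysohn y < t.
Proof.
move=> /(inf_lt (dyadic_levels_n0 x)) [_ [[n [k [Sx ->]]]|->]] kt.
  apply: (@filterS _ _ _ (dyadic_set n k)).
    by move=> y Sy; apply: le_lt_trans kt; exact: dyadic_urysohn_le.
  by apply: open_nbhs_nbhs; split => //; exact/P_open/dyadic_setP.
by apply: nearW => y; apply: le_lt_trans kt; exact: dyadic_urysohn_le1.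
Qed.

(* With [t < k / 2 ^ n < (k + 1) / 2 ^ n < dyadic_urysohn x], the point [x]
   lies outside the closure of [dyadic_set n k], off which the function is at
   least [k / 2 ^ n]. *)
Let dyadic_urysohn_lsc x t : t < dyadic_urysohn x ->
  \forall y \near x, t < dyadic_urysohn y.
Proof.
move=> tf; have [t0|t0] := ltP t 0.
  by apply: nearW => y; apply: lt_le_trans t0 _; exact: dyadic_urysohn_ge0.
have [n [k [tk k1f]]] := dyadic_between t0 tf.
have kn : (k < 2 ^ n)%N.
  have := lt_le_trans k1f (dyadic_urysohn_le1 x).
  by rewrite ltr_pdivrMr // mul1r ltr_nat => /ltnW.
have nclx : ~ closure (dyadic_set n k) x.
  move=> /(closure_dyadic_set kn) /dyadic_urysohn_le.
  by rewrite leNgt k1f.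
apply: (@filterS _ _ _ (~` closure (dyadic_set n k))).
  move=> y ncly; apply: lt_le_trans tk _; apply: dyadic_urysohn_ge (ltnW kn) _.
  by move=> /(@subset_closure _ _ y).
by apply: open_nbhs_nbhs; split => //; rewrite openC; exact: closed_closure.
Qed.

Lemma dyadic_urysohn_continuous : continuous dyadic_urysohn.
Proof.
move=> x; apply/cvgrPdist_lt => e e0; near=> y.
rewrite ltr_distlC; apply/andP; split; near: y.
  by apply: dyadic_urysohn_lsc; rewrite ltrBlDr ltrDl.
by apply: dyadic_urysohn_usc; rewrite ltrDl.
Unshelve. all: by end_near.
Qed.

Lemma interpolation_urysohn : exists f : X -> R,
  [/\ continuous f, forall x, 0 <= f x <= 1,
     forall x y, (forall U, P U -> U y -> U x) -> f x <= f y,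
     forall x, W0 x -> f x = 0 & forall x, ~ V0 x -> f x = 1].
Proof.
exists dyadic_urysohn; split.
- exact: dyadic_urysohn_continuous.
- by move=> x; rewrite dyadic_urysohn_ge0 dyadic_urysohn_le1.
- exact: dyadic_urysohn_mono.
- exact: dyadic_urysohn_W0.
- exact: dyadic_urysohn_notV0.
Qed.

End dyadic_urysohn.

Lemma closed_image_compact {T U : topologicalType} (f : T -> U) (A : set T) :
  hausdorff_space U -> continuous f -> compact A -> closed (f @` A).
Proof.
move=> hU cf cA; apply: compact_closed hU _.
by apply: continuous_compact cA; exact: continuous_subspaceT.
Qed.

Section compact_T2_preordered_space.
Context {X : topologicalType} (lec : X -> X -> Prop).
Hypotheses (cX : compact [set: X]) (hX : hausdorff_space X).
Hypotheses (lec_pre : preorder_rel lec) (lec_closed : closed (graph_of lec)).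

Let cXX : compact [set: X * X].
Proof. by rewrite -setXTT; exact: compact_setX. Qed.

Lemma upset_closed (A : set X) : closed A -> closed (upset lec A).
Proof.
move=> cA; have -> : upset lec A = snd @` (graph_of lec `&` fst @^-1` A).
  apply/seteqP; split => [z [y Ay yz]|_ [[y z] [/= yz Ay] <-]]; last by exists y.
  by exists (y, z).
apply: closed_image_compact => //; first by move=> p; exact: cvg_snd.
apply: subclosed_compact cXX _ => //; apply: closedI => //.
by apply: preimage_closed => // p _; exact: cvg_fst.
Qed.

Lemma downset_closed (A : set X) : closed A -> closed (downset lec A).
Proof.
move=> cA; have -> : downset lec A = fst @` (graph_of lec `&` snd @^-1` A).
  apply/seteqP; split => [z [y Ay zy]|_ [[z y] [/= zy Ay] <-]]; last by exists y.
  by exists (z, y).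
apply: closed_image_compact => //; first by move=> p; exact: cvg_fst.
apply: subclosed_compact cXX _ => //; apply: closedI => //.
by apply: preimage_closed => // p _; exact: cvg_snd.
Qed.

(* Normality gives an open [B] with [downset (closure S) <= B] and
   [closure B <= V]; removing the upset of [~` B] makes it a lower set. *)
Lemma lower_open_interpolation (S V : set X) :
  open V -> lower_set lec V -> closure S `<=` V ->
  exists W, [/\ open W, lower_set lec W, closure S `<=` W & closure W `<=` V].
Proof.
move=> oV lV SV; have [refl_lec trans_lec] := lec_pre.
have cD : closed (downset lec (closure S)) by exact/downset_closed/closed_closure.
have nV : set_nbhs (downset lec (closure S)) V.
  apply/set_nbhsP; exists V; split => // z [s Ss zs]; exact: lV zs (SV s Ss).
have [U /set_nbhsP [B [oB DB BU]] UV] := compact_normal hX cX cD nV.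
exists (~` upset lec (~` B)); split.
- by rewrite openC; apply: upset_closed; rewrite closedC.
- by move=> x y xy nUy [u nBu ux]; apply: nUy; exists u => //; exact: trans_lec ux xy.
- by move=> s Ss [u nBu us]; apply: nBu; apply: DB; exists s.
- apply: subset_trans UV; apply: subset_trans (closureS BU).
  by apply: closureS => x nUx; apply: contrapT => nBx; apply: nUx; exists x.
Qed.

Lemma lower_open_midpoint : exists mid : set X -> set X -> set X, forall U V,
  open V -> lower_set lec V -> closure U `<=` V ->
  [/\ open (mid U V), lower_set lec (mid U V),
     closure U `<=` mid U V & closure (mid U V) `<=` V].
Proof.
have /choice [mid midP] : forall UV : set X * set X, exists W,
    open UV.2 -> lower_set lec UV.2 -> closure UV.1 `<=` UV.2 ->
    [/\ open W, lower_set lec W, closure UV.1 `<=` W & closure W `<=` UV.2].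
  move=> [U V].
  have [[oV lV UV]|nUV] := pselect [/\ open V, lower_set lec V & closure U `<=` V].
    by have [W ?] := lower_open_interpolation oV lV UV; exists W.
  by exists V => oV lV UV; exfalso; exact: nUV.
by exists (fun U V => mid (U, V)) => U V; exact: midP (U, V).
Qed.

Lemma isotone_urysohn {R : realType} a b : ~ lec a b ->
  exists f : X -> R, [/\ continuous f, (forall z, 0 <= f z <= 1),
    isotone lec (fun u v : R => u <= v) f, f b = 0 & f a = 1].
Proof.
move=> nab; have [refl_lec trans_lec] := lec_pre.
have closed1 := accessible_closed_set1 (hausdorff_accessible hX).
pose V0 := ~` upset lec [set a].
have oV0 : open V0 by rewrite openC; exact/upset_closed/closed1.
have lV0 : lower_set lec V0.
  by move=> x y xy nV0y [_ -> ax]; apply: nV0y; exists a => //; exact: trans_lec ax xy.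
have bV0 : closure (downset lec [set b]) `<=` V0.
  rewrite -(closure_id _).1; last exact/downset_closed/closed1.
  by move=> z [_ -> zb] [_ -> az]; apply: nab; exact: trans_lec az zb.
have [W0 [oW0 lW0 bW0 W0V0]] := lower_open_interpolation oV0 lV0 bV0.
have [mid midP] := lower_open_midpoint.
pose P U := open U /\ lower_set lec U.
have PmidP U V : P U -> P V -> closure U `<=` V ->
    [/\ P (mid U V), closure U `<=` mid U V & closure (mid U V) `<=` V].
  by move=> _ [oV lV] UV; have [] := midP U V oV lV UV.
have [f [cf f01 fmono fW0 fV0]] :=
  interpolation_urysohn (R := R) (fun U (PU : P U) => PU.1) PmidP
    (conj oW0 lW0) (conj oV0 lV0) W0V0.
exists f; split => //.
- by move=> x y xy; apply: fmono => U [_ lU]; exact: lU.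
- by apply/fW0/bW0/subset_closure; exists b => //; exact: refl_lec.
- by apply: fV0; apply; exists a => //; exact: refl_lec.
Qed.

End compact_T2_preordered_space.

Section dense_embedding.
Context {E X : topologicalType} (c : E -> X).
Hypotheses (hX : hausdorff_space X) (cc : continuous c) (inj_c : injective c).
Hypothesis c_open : forall U, open U -> exists V, open V /\ c @` U = V `&` range c.
Hypothesis c_dense : dense (range c).

Lemma open_trace_sub_image (N U : set E) (V : set X) :
  compact N -> U `<=` N -> open V -> c @` U = V `&` range c -> V `<=` c @` N.
Proof.
move=> cN UN oV cUV w Vw.
have cl_cN : closed (c @` N).
  exact: closed_image_compact hX cc cN.
rewrite (closure_id (c @` N)).1 // => B Bw.
have [u [[Vu Bu] [y _ yu]]] : (V `&` B°) `&` range c !=set0.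
  by apply: c_dense; [exists w | apply: openI => //; exact: open_interior].
have [x Ux xu] : (c @` U) u by rewrite cUV; split => //; exists y.
by exists u; split; [rewrite -xu; exists x => //; exact: UN | exact: interior_subset].
Qed.

(* Extend [g] by [g \o c^-1] on [range c] and by its constant value elsewhere;
   continuity at [c x] comes from an open [V] inside the image of a compact
   neighbourhood of [x], at other points from the open complement of [c @` K]. *)
Lemma extend_const_outside_compact {R : realType} (g : E -> R) :
  locally_compact [set: E] -> continuous g ->
  (exists K : set E, compact K /\ exists a : R, forall x, ~ K x -> g x = a) ->
  exists G : X -> R, continuous G /\ forall x, G (c x) = g x.
Proof.
move=> lcE cg [K [cK [a ga]]].
pose G z := if pselect (exists x, c x = z) is left h then g (projT1 (cid h)) else a.
have Gc x : G (c x) = g x.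
  rewrite /G; case: pselect => [h|[]]; last by exists x.
  by case: (cid h) => y /= /inj_c ->.
exists G; split => // z W; change (nbhs (G z) W -> nbhs z (G @^-1` W)).
have [[x <-]|nz] := pselect (exists x, c x = z); move=> GzW.
  have [N Nx [cN _]] := lcE x I; rewrite withinET in Nx.
  have gW : nbhs x (g @^-1` W) by move: GzW; rewrite Gc; exact: cg.
  set U := (N `&` g @^-1` W)°.
  have [V [oV cUV]] := c_open (@open_interior _ (N `&` g @^-1` W)).
  have UN : U `<=` N by apply: subset_trans (@interior_subset _ _) (@subIsetl _ _ _).
  have VN := open_trace_sub_image cN UN oV cUV.
  have Vcx : V (c x).
    have : (c @` U) (c x) by exists x => //; exact: filterI.
    by rewrite cUV => -[].
  apply: (@filterS _ _ _ V); last exact: open_nbhs_nbhs.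
  move=> w Vw; have [y Uy <-] : (c @` U) w.
    by rewrite cUV; split => //; have [y _ <-] := VN _ Vw; exists y.
  by rewrite /= Gc; have [] := interior_subset Uy.
have cl_cK : closed (c @` K).
  exact: closed_image_compact hX cc cK.
apply: (@filterS _ _ _ (~` (c @` K))); last first.
  apply: open_nbhs_nbhs; split; first by rewrite openC.
  by move=> [y _ cy]; apply: nz; exists y.
move=> w nKw /=; have -> : G w = a.
  rewrite /G; case: pselect => // h; case: (cid h) => y /= cy.
  by apply: ga => Ky; apply: nKw; exists y.
by move: GzW; rewrite /G; case: pselect => // _ /nbhs_singleton.
Qed.

End dense_embedding.

Section Hcompactification.
Context {R : realType} {E X : topologicalType}.
Variables (le : E -> E -> Prop) (lec : X -> X -> Prop) (c : E -> X).
Hypothesis cE : hausdorff_T2_preorder_compactification le lec c.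

Local Notation H := (Hfam (R:=R) le lec c).

Lemma Hcompactification_dominated : locally_compact [set: E] -> dominates_HC lec c H.
Proof.
move=> lcE; have [[_ [_ [[cc [_ [inj_c [c_open _]]]] c_dense]]] [hX _]] := cE.
have ext (i : HCindex H) : exists G : X -> R,
    [/\ continuous G, forall x, G (c x) = sval i x
       & H (sval i) -> isotone lec (fun u v : R => u <= v) G].
  case: i => g /= gHC.
  have [[_ [G [cG [_ [isoG Gc]]]]]|notH] := pselect (H g); first by exists G.
  have [/notH //|[cg [_ gK]]] := gHC.
  have [G [cG Gc]] := extend_const_outside_compact hX cc inj_c c_open c_dense lcE cg gK.
  by exists G.
have /choice [G GP] := ext.
pose C z : {ptws HCindex H -> R} := fun i => G i z.
have cC : continuous C.
  move=> z; apply/cvg_sup => i; have [cG _ _] := GP i.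
  exact: (@continuous_comp_initial _ X R (fun f : HCindex H -> R => f i) C cG z).
have Cc x : C (c x) = HCmap (Hf := H) x.
  by apply: funext => i; have [_ + _] := GP i; apply.
exists C; split => //; split; [|split => //].
- move=> z B /cC; rewrite nbhsE => -[B' [oB' B'z] B'B].
  have [u [B'u [x _ cxu]]] : B' `&` range c !=set0 by apply: c_dense => //; exists z.
  by exists (C (c x)); split; [rewrite Cc; exists x | apply: B'B; rewrite cxu].
- by move=> z w zw i Hi; have [_ _ /(_ Hi)] := GP i; apply.
Qed.

Lemma graph_of_Hfam : graph_of le = \bigcap_(h in H) Gf h.
Proof.
have [[cX [lec_pre [[cc [iso_c [_ [_ refl_c]]]] _]]] [hX lec_closed]] := cE.
apply/seteqP; split=> [[x y] /= xy h [[_ [isoh _]] _]|[x y] /= Hxy].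
  exact: isoh.
apply: contrapT => nxy.
have /(isotone_urysohn (R:=R) cX hX lec_pre lec_closed) [F [cF F01 isoF Fy Fx]] :
    ~ lec (c x) (c y) by move/refl_c.
have HFc : H (F \o c).
  split; last by exists F.
  split; first by move=> t; apply: continuous_comp; [exact: cc | exact: cF].
  by split => [u v uv|t]; [apply/isoF/iso_c | exact: F01].
by have := Hxy _ HFc; rewrite /Gf /= Fx Fy ler10.
Qed.

End Hcompactification.

Theorem mainTheorem12 (R : realType) (E : topologicalType) (le : E -> E -> Prop)
  (X : topologicalType) (lec : X -> X -> Prop) (c : E -> X) :
  locally_compact [set: E] ->
  T2_preordered le ->
  tychonoff_space R E ->
  graph_of le = \bigcap_(f in Ffam (R:=R) le) Gf f ->
  hausdorff_T2_preorder_compactification le lec c ->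
  dominates_HC lec c (Hfam (R:=R) le lec c) /\
  graph_of le = \bigcap_(h in Hfam (R:=R) le lec c) Gf h.
Proof.
move=> lcE _ _ _ cE.
by split; [exact: Hcompactification_dominated | exact: graph_of_Hfam].
Qed.
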